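(* Let $M'=M[D,K]$ be a compatible minor of the weighted uncertainty matroid $\mathcal{M}$ such that $M'$ contains no non-trivial element $f$ with either (a) $w_f=L_f$ and $f$ a maximum-weight element of some circuit of $M'$, or (b) $w_f=U_f$ and $f$ a minimum-weight element of $E(M')\setminus\mathrm{span}_{M'}(B'\setminus\{f\})$ for some basis $B'$ of $M'$ containing $f$. Let $e$ be a trivial element of $M'$ such that (i) there exists a basis $B$ of $M'$ with $e\in B$ and (ii) $e$ has minimum weight among the elements of $E(M')$ not in $\mathrm{span}_{M'}(B\setminus\{e\})$. Then $M[D,K\cup\{e\}]$ is a compatible minor of $\mathcal{M}$.
   Context: A weighted uncertainty matroid $\mathcal{M}=(E,\mathcal{I},A,w)$ consists of a matroid $M=(E,\mathcal{I})$ on a finite set $E$, for each $e\in E$ a non-empty finite union $A_e$ of bounded real intervals (each open or closed), a weight $w_e\in A_e$, and a query cost $c_e\ge0$. $L_e=\inf A_e$, $U_e=\sup A_e$; $e$ is trivial if $A_e=\{w_e\}$. A minimum-weight basis (MWB) is a basis minimizing total weight. A weight assignment is $w^*$ with $w^*_e\in A_e$, consistent with $Q$ if $w^*_e=w_e$ on $Q$. $Q$ verifies an MWB $B$ if for every weight assignment consistent with $Q$, $B$ is an MWB with respect to it; a certificate for $\mathcal{M}$ is a set verifying some MWB, and $c^*$ denotes the minimum cost $\sum_{e\in Q}c_e$ of a certificate for $\mathcal{M}$. For $D,K\subseteq E$, $M[D,K]$ is the matroid obtained from $M$ by deleting $D$ and contracting $K$, ground set $E(M[D,K])=E\setminus(D\cup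 K)$, weights restricted. $M[D,K]$ is a compatible minor if there is a set $Q$ of cost $c^*$ verifying an MWB $B$ of $\mathcal{M}$ with $K\subseteq B$, $D\cap B=\emptyset$. $\mathrm{span}_N(X)=\{e: r_N(X\cup\{e\})=r_N(X)\}$. *)

From HB Require Import structures.
From mathcomp Require Import all_boot all_order all_algebra.
From mathcomp Require Import reals.
Set Implicit Arguments. Unset Strict Implicit. Unset Printing Implicit Defensive.
Import Order.TTheory GRing.Theory Num.Theory.
Local Open Scope ring_scope.

Record matroid (E : finType) := Matroid {
  indep : {set E} -> bool;
  indep0 : indep set0;
  indep_sub : forall I J : {set E}, J \subset I -> indep I -> indep J;
  indep_aug : forall I J : {set E}, indep I -> indep J -> (#|I| < #|J|)%N ->
     exists2 x, x \in J :\: I & indep (x |: I)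
}.

Section Matroids.
Variable E : finType.
Variable M : matroid E.

Definition rank (X : {set E}) : nat :=
  \max_(I : {set E} | indep M I && (I \subset X)) #|I|.

(* The minor M[D,K]: delete D, contract K; ground set E \ (D u K).
   Rank of the contraction: r'(X) = r(X u K) - r(K). *)
Definition mground (D K : {set E}) : {set E} := ~: (D :|: K).
Definition mrank (D K : {set E}) (X : {set E}) : nat :=
  (rank (X :|: K) - rank K)%N.
Definition mindep (D K : {set E}) (X : {set E}) : bool :=
  (X \subset mground D K) && (mrank D K X == #|X|).
Definition mbasis (D K : {set E}) (B : {set E}) : bool :=
  mindep D K B &&
  [forall f in mground D K, mindep D K (f |: B) ==> (f \in B)].
Definition mcircuit (D K : {set E}) (C : {set E}) : bool :=
  (C \subset mground D K) && ~~ mindep D K C &&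
  [forall C' : {set E}, (C' \proper C) ==> mindep D K C'].
Definition mspan (D K : {set E}) (X : {set E}) : {set E} :=
  [set f in mground D K | mrank D K (f |: X) == mrank D K X].
End Matroids.

Section Uncertainty.
Variable R : realType.
Variable E : finType.

(* A_e is given as a finite list of intervals; A_e is their union. *)
Definition inA (A : E -> seq (interval R)) (e : E) (x : R) : bool :=
  has (fun i => x \in i) (A e).

(* a bounded interval which is either open (a,b) or closed [a,b] *)
Definition bounded_open_or_closed (i : interval R) : bool :=
  match i with
  | Interval (BSide b1 _) (BSide b2 _) => b1 == ~~ b2
  | _ => false
  end.

Definition Lo (A : E -> seq (interval R)) (e : E) : R := inf (fun x : R => is_true (inA A e x)).
Definition Up (A : E -> seq (interval R)) (e : E) : R := sup (fun x : R => is_true (inA A e x)).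

Definition trivial_elt (A : E -> seq (interval R)) (w : E -> R) (e : E) : Prop :=
  forall x, inA A e x <-> x = w e.

Definition wum_wf (A : E -> seq (interval R)) (w c : E -> R) : Prop :=
  forall e, [/\ all bounded_open_or_closed (A e), exists x, inA A e x,
               inA A e (w e) & 0 <= c e].

Definition weight_assignment (A : E -> seq (interval R)) (ws : E -> R) : Prop :=
  forall e, inA A e (ws e).

Definition consistent (w : E -> R) (Q : {set E}) (ws : E -> R) : Prop :=
  forall e, e \in Q -> ws e = w e.

Variable M : matroid E.

Definition is_basis (B : {set E}) : bool := mbasis M set0 set0 B.

Definition is_MWB (ws : E -> R) (B : {set E}) : Prop :=
  is_basis B /\
  forall B', is_basis B' -> \sum_(x in B) ws x <= \sum_(x in B') ws x.

Definition verifies (A : E -> seq (interval R)) (w : E -> R)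
    (Q B : {set E}) : Prop :=
  forall ws, weight_assignment A ws -> consistent w Q ws -> is_MWB ws B.

Definition certificate A w (Q : {set E}) : Prop := exists B, verifies A w Q B.

Definition cost (c : E -> R) (Q : {set E}) : R := \sum_(x in Q) c x.

Definition compatible_minor A (w c : E -> R) (D K : {set E}) : Prop :=
  exists Q B, [/\ verifies A w Q B,
                  (forall Q', certificate A w Q' -> cost c Q <= cost c Q'),
                  K \subset B & [disjoint D & B]].
End Uncertainty.

From HB Require Import structures.
From mathcomp Require Import all_boot all_order all_algebra.
From mathcomp Require Import reals.
Set Implicit Arguments. Unset Strict Implicit. Unset Printing Implicit Defensive.

(* Let Q be an optimal query set verifying a minimum-weight basis B with
   K <= B and B disjoint from D, and assume e is not in B.  Strong basis
   exchange between B and a basis B0 of M[D,K] through e gives f in B \ K,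
   outside span_{M[D,K]}(B0 - e) (so w_e <= w_f by the choice of e), such
   that B - f + e is a basis.  Q then verifies
   B - f + e as soon as every assignment consistent with Q keeps
   w_e <= w_f, which can only fail when f is unqueried and non-trivial.
   But then moving the weight of f alone through A_f must keep B minimal,
   which forces U_f = w_f, and f is a minimum-weight element of its
   fundamental cocircuit with respect to B \ K: f would be of type (b). *)

Lemma setDUK (T : finType) (A C : {set T}) : C \subset A -> (A :\: C) :|: C = A.
Proof. by move=> sCA; rewrite setUC -{1}(setIidPr sCA) setID. Qed.

Section MatroidTheory.
Variables (E : finType) (M : matroid E).
Implicit Types (B I J K D S T X Y Z : {set E}) (e f g x : E).

Lemma rank_le_card X : rank M X <= #|X|.
Proof. by apply/bigmax_leqP => I /andP[_ /subset_leq_card]. Qed.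

Lemma leq_card_rank I X : indep M I -> I \subset X -> #|I| <= rank M X.
Proof.
move=> iI sIX.
by apply: (@leq_bigmax_cond _ (fun J => indep M J && (J \subset X))); rewrite iI.
Qed.

Lemma rank_indep X : indep M X -> rank M X = #|X|.
Proof.
by move=> iX; apply/eqP; rewrite eqn_leq rank_le_card leq_card_rank.
Qed.

Lemma rank_card_indep X : rank M X = #|X| -> indep M X.
Proof.
pose P J := indep M J && (J \subset X).
have [|I /andP[iI sIX] rankI] := @eq_bigmax_cond _ P (fun J => #|J|).
  by apply/card_gt0P; exists set0; rewrite unfold_in /P indep0 sub0set.
have -> : rank M X = #|I| := rankI.
move=> cardI; suff <- : I = X by [].
by apply/eqP; rewrite eqEcard sIX cardI /=.
Qed.

Lemma card_indep_le X Y J : indep M X ->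
    (forall y, y \in Y -> indep M (y |: X) -> y \in X) ->
  indep M J -> J \subset X :|: Y -> #|J| <= #|X|.
Proof.
move=> iX clY iJ sJ; rewrite leqNgt; apply/negP => ltXJ.
have [x /setDP[xJ xNX] ixX] := indep_aug iX iJ ltXJ.
case/setUP: (subsetP sJ x xJ) => [xX | xY]; first by rewrite xX in xNX.
by rewrite (clY x xY ixX) in xNX.
Qed.

Lemma rank_setU1_dep Z g : indep M Z -> ~~ indep M (g |: Z) ->
  rank M (g |: Z) = rank M Z.
Proof.
move=> iZ dgZ; rewrite (rank_indep iZ); apply/eqP.
rewrite eqn_leq leq_card_rank ?subsetUr // andbT.
apply/bigmax_leqP => J /andP[iJ sJ].
apply: (card_indep_le (Y := [set g])) iZ _ iJ _; last by rewrite setUC.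
by move=> y /set1P -> igZ; rewrite igZ in dgZ.
Qed.

Lemma indep_extend T S : indep M T -> T \subset S ->
  exists2 X, [/\ indep M X, T \subset X & X \subset S] &
    forall x, x \in S -> indep M (x |: X) -> x \in X.
Proof.
move=> iT sTS; pose P X := [&& indep M X, T \subset X & X \subset S].
have PT : P T by rewrite /P iT subxx sTS.
have [X /maxsetP[/and3P[iX sTX sXS] maxX] _] := maxset_exists PT.
exists X => // x xS ixX; suff <- : x |: X = X by exact: setU11.
apply: maxX; last exact: subsetUr.
by rewrite /P ixX (subset_trans sTX (subsetUr _ _)) subUset sub1set xS sXS.
Qed.

Lemma in_mground D K x : (x \in mground D K) = (x \notin D) && (x \notin K).
Proof. by rewrite !inE negb_or. Qed.

Lemma mindep_contract D K X : indep M K -> X \subset mground D K ->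
  mindep M D K X = indep M (X :|: K).
Proof.
move=> iK sX; have dXK : [disjoint X & K].
  rewrite disjoint_subset (subset_trans sX) //.
  by apply/subsetP => x; rewrite in_mground inE => /andP[].
have cardXK : #|X :|: K| = #|X| + #|K|.
  by rewrite cardsU (disjoint_setI0 dXK) cards0 subn0.
rewrite /mindep sX /mrank (rank_indep iK); apply/eqP/idP => [rXK | iXK].
  by apply: rank_card_indep; rewrite cardXK -rXK subnK // leq_card_rank ?subsetUr.
by rewrite (rank_indep iXK) cardXK addnK.
Qed.

Lemma mindep_indep D K X : indep M K -> mindep M D K X -> indep M (X :|: K).
Proof.
by move=> iK mX; rewrite -(mindep_contract (D := D)) //; case/andP: mX.
Qed.

Lemma mrank_mindep D K X : mindep M D K X -> mrank M D K X = #|X|.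
Proof. by case/andP=> _ /eqP. Qed.

Lemma mem_mspan D K Y g : g \in mground D K -> g \in Y -> g \in mspan M D K Y.
Proof.
move=> gG gY; have gYY : g |: Y = Y by apply/setUidPr; rewrite sub1set.
by rewrite inE gG gYY /=.
Qed.

Lemma notin_mspan D K Y g : mindep M D K Y -> mindep M D K (g |: Y) ->
  g \notin Y -> g \notin mspan M D K Y.
Proof.
move=> mY mgY gY; rewrite inE (mrank_mindep mY) (mrank_mindep mgY).
by rewrite cardsU1 gY add1n gtn_eqF ?andbF.
Qed.

Lemma mindep_notin_mspan D K Y g : indep M K -> mindep M D K Y ->
  g \in mground D K -> g \notin mspan M D K Y -> mindep M D K (g |: Y).
Proof.
move=> iK mY gG; have sgY : g |: Y \subset mground D K.
  by rewrite subUset sub1set gG; case/andP: mY.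
rewrite inE gG (mindep_contract iK sgY) -setUA; apply: contraNT => dep.
have iYK : indep M (Y :|: K) := mindep_indep iK mY.
by rewrite /mrank /= -setUA rank_setU1_dep.
Qed.

Lemma is_basisP B :
  reflect (indep M B /\ forall x, indep M (x |: B) -> x \in B) (is_basis M B).
Proof.
have sub X : X \subset mground set0 set0.
  by apply/subsetP => x _; rewrite in_mground !inE.
have indepE X : mindep M set0 set0 X = indep M X.
  by rewrite (mindep_contract (indep0 M) (sub X)) setU0.
rewrite /is_basis /mbasis indepE.
apply: (iffP andP) => [[iB /forall_inP maxB] | [iB maxB]]; split=> //.
  move=> x ixB; have xG : x \in mground set0 set0 by rewrite in_mground !inE.
  by apply: (implyP (maxB x xG)); rewrite indepE.
by apply/forall_inP => x _; apply/implyP; rewrite indepE; exact: maxB.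
Qed.

Lemma mbasis_contract D K B : is_basis M B -> K \subset B -> [disjoint D & B] ->
  mbasis M D K (B :\: K).
Proof.
move=> /is_basisP[iB maxB] sKB dDB; have iK := indep_sub sKB iB.
have sG : B :\: K \subset mground D K.
  by apply/subsetP => x /setDP[xB xK]; rewrite in_mground xK (disjointFl dDB xB).
rewrite /mbasis (mindep_contract iK sG) setDUK // iB /=.
apply/forall_inP => x xG; apply/implyP.
have sxG : x |: (B :\: K) \subset mground D K by rewrite subUset sub1set xG.
rewrite (mindep_contract iK sxG) -setUA setDUK // => /maxB xB.
by rewrite in_setD xB andbT; move: xG; rewrite in_mground => /andP[].
Qed.

Lemma basis_of_card_indep B X : is_basis M B -> indep M X -> #|B| <= #|X| ->
  is_basis M X.
Proof.
move=> /is_basisP[iB maxB] iX leBX; apply/is_basisP; split=> // h ihX.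
apply/negPn/negP => hX; have ltB : #|B| < #|h |: X| by rewrite cardsU1 hX.
have [x /setDP[_ xNB] ixB] := indep_aug iB ihX ltB.
by rewrite maxB in xNB.
Qed.

Lemma basis_swap B f g : is_basis M B -> f \in B -> g \notin B :\ f ->
  indep M (g |: (B :\ f)) -> is_basis M (g |: (B :\ f)).
Proof.
move=> bB fB gB igB; apply: basis_of_card_indep bB igB _.
by rewrite cardsU1 gB (cardsD1 f B) fB.
Qed.

Lemma indep_setU1_spanned I T e : indep M I -> indep M (e |: I) -> e \notin I ->
    indep M T -> (forall t, t \in T -> indep M (t |: I) -> t \in I) ->
  indep M (e |: T).
Proof.
move=> iI ieI eI iT clT.
have [X [iX sTX sXIT] maxX] := indep_extend iT (subsetUr I T).
have leXI : #|X| <= #|I| by exact: (card_indep_le (Y := T)) iI clT iX sXIT.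
have ltX : #|X| < #|e |: I| by rewrite cardsU1 eI.
have [x /setDP[xeI xNX] ixX] := indep_aug iX ieI ltX.
case/setU1P: xeI => [xe | xI]; first by apply: indep_sub ixX; rewrite -xe setUS.
have xIT : x \in I :|: T by rewrite inE xI.
by rewrite (maxX x xIT ixX) in xNX.
Qed.

Lemma basis_exchange B I e : is_basis M B -> indep M I -> e \notin I ->
    indep M (e |: I) -> e \notin B ->
  exists f, [/\ f \in B, f \notin I, indep M (f |: I) &
              is_basis M (e |: (B :\ f))].
Proof.
move=> bB iI eI ieI eB; have /is_basisP[iB maxB] := bB.
(* T = B meets span I; a maximal independent X with e + T <= X <= e + B
   then misses exactly one f of B, and f lies outside span I. *)
pose T := [set t in B | (t \in I) || ~~ indep M (t |: I)].
have sTB : T \subset B by apply/subsetP => t; rewrite inE => /andP[].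
have ieT : indep M (e |: T).
  apply: (indep_setU1_spanned iI ieI eI (indep_sub sTB iB)) => t.
  by rewrite inE => /andP[_ /orP[// | /negbTE ->]].
have [X [ieX seTX sXeB] maxX] := indep_extend ieT (setUS [set e] sTB).
have eX : e \in X := subsetP seTX e (setU11 e T).
have [f fB fX] : exists2 f, f \in B & f \notin X.
  apply/exists_inP; apply: contraT => /exists_inPn BX.
  suff /maxB : indep M (e |: B) by rewrite (negbTE eB).
  apply: indep_sub ieX; rewrite subUset sub1set eX.
  by apply/subsetP => y /BX; rewrite negbK.
have leBX : #|B| <= #|X|.
  rewrite leqNgt; apply/negP => ltXB.
  have [x /setDP[xB xNX] ixX] := indep_aug ieX iB ltXB.
  by rewrite (maxX x (setU1r e xB) ixX) in xNX.
have X_def : X = e |: (B :\ f).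
  have cardB : #|B| = 1 + #|B :\ f| by rewrite (cardsD1 f B) fB.
  apply/eqP; rewrite eqEcard cardsU1 inE (negbTE eB) andbF /= -cardB leBX.
  rewrite andbT; apply/subsetP => y yX.
  case/setU1P: (subsetP sXeB y yX) => [-> | yB]; first exact: setU11.
  by apply/setU1r/setD1P; split=> //; apply: contraNneq fX => <-.
have fT : f \notin T.
  by apply: contra fX => fT; exact: subsetP seTX f (setU1r e fT).
move: fT; rewrite inE fB negb_or negbK => /andP[fI ifI].
by exists f; split=> //; rewrite -X_def; exact: basis_of_card_indep bB ieX leBX.
Qed.

Lemma mbasis_exchange D K B B0 e : is_basis M B -> K \subset B ->
    [disjoint D & B] -> mbasis M D K B0 -> e \in B0 -> e \notin B ->
  exists f, [/\ f \in B, f \in mground D K :\: mspan M D K (B0 :\ e) &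
                 is_basis M (e |: (B :\ f))].
Proof.
move=> bB sKB dDB /andP[mB0 _] eB0 eB.
have iK : indep M K by case/is_basisP: bB => iB _; exact: indep_sub sKB iB.
have sB0 : B0 \subset mground D K by case/andP: mB0.
have sB0e : B0 :\ e \subset mground D K := subset_trans (subD1set B0 e) sB0.
have eK : e \notin K by move: (subsetP sB0 e eB0); rewrite in_mground => /andP[].
have ieI : indep M (e |: ((B0 :\ e) :|: K)).
  by rewrite setUA setD1K // -(mindep_contract iK sB0).
have iI : indep M ((B0 :\ e) :|: K) := indep_sub (subsetUr _ _) ieI.
have eI : e \notin (B0 :\ e) :|: K by rewrite in_setU setD11.
have [f [fB fI ifI bX]] := basis_exchange bB iI eI ieI eB.
move: fI; rewrite in_setU negb_or => /andP[fB0 fK].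
have fG : f \in mground D K by rewrite in_mground fK (disjointFl dDB fB).
exists f; split=> //; rewrite in_setD fG andbT; apply: notin_mspan fB0.
  by rewrite (mindep_contract iK sB0e).
have sfB0 : f |: (B0 :\ e) \subset mground D K by rewrite subUset sub1set fG.
by rewrite (mindep_contract iK sfB0) -setUA.
Qed.

End MatroidTheory.

Import Order.TTheory GRing.Theory Num.Theory.
Local Open Scope ring_scope.

Lemma sup_maximum (R : realType) (S : R -> Prop) m :
  S m -> (forall x, S x -> x <= m) -> sup S = m.
Proof.
move=> Sm ubm; apply/le_anti/andP; split.
  by apply: ge_sup; [exists m | exact: ubm].
by apply: ub_le_sup => //; exists m.
Qed.

Section MinimumWeightBases.
Variables (R : realType) (E : finType) (M : matroid E).
Implicit Types (ws : E -> R) (B D K : {set E}) (f g : E).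

Lemma is_MWB_swap_le ws B f g : is_MWB M ws B -> f \in B -> g \notin B :\ f ->
  indep M (g |: (B :\ f)) -> ws f <= ws g.
Proof.
move=> [bB minB] fB gB igB; have := minB _ (basis_swap bB fB gB igB).
by rewrite (big_setD1 f fB) big_setU1 //= lerD2r.
Qed.

Lemma is_MWB_swap ws B f g : is_MWB M ws B -> f \in B -> g \notin B :\ f ->
  is_basis M (g |: (B :\ f)) -> ws g <= ws f -> is_MWB M ws (g |: (B :\ f)).
Proof.
move=> [_ minB] fB gB bX le_gf; split=> // B' bB'; apply: le_trans (minB B' bB').
by rewrite (big_setD1 f fB) big_setU1 //= lerD2r.
Qed.

Lemma is_MWB_cocircuit_min ws D K B f : is_MWB M ws B -> K \subset B ->
    [disjoint D & B] -> f \in B :\: K ->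
  [/\ mbasis M D K (B :\: K), f \in B :\: K,
      f \in mground D K :\: mspan M D K ((B :\: K) :\ f) &
      forall g, g \in mground D K :\: mspan M D K ((B :\: K) :\ f) ->
        ws f <= ws g].
Proof.
move=> mwB sKB dDB fBK; have [bB _] := mwB.
have iK : indep M K by case/is_basisP: bB => iB _; exact: indep_sub sKB iB.
have bBK := mbasis_contract bB sKB dDB; have /andP[mBK _] := bBK.
have sBK : B :\: K \subset mground D K by case/andP: mBK.
have [fB fK] : f \in B /\ f \notin K by case/setDP: fBK.
have fG : f \in mground D K := subsetP sBK f fBK.
have YK : (B :\: K) :\ f :|: K = B :\ f.
  by rewrite setDDl [K :|: _]setUC -setDDl setDUK // subsetD1 sKB fK.
have mY : mindep M D K ((B :\: K) :\ f).
  rewrite (mindep_contract iK (subset_trans (subD1set _ _) sBK)) YK.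
  by case/is_basisP: bB => iB _; exact: indep_sub (subD1set B f) iB.
split=> //.
  by rewrite in_setD fG andbT notin_mspan ?setD11 ?setD1K.
move=> g /setDP[gG gNspan].
have mgY := mindep_notin_mspan iK mY gG gNspan.
apply: is_MWB_swap_le mwB fB _ _; last by rewrite -YK setUA (mindep_indep iK mgY).
have gY : g \notin (B :\: K) :\ f by apply: contra gNspan; exact: mem_mspan.
by rewrite -YK in_setU negb_or gY; move: gG; rewrite in_mground => /andP[].
Qed.

End MinimumWeightBases.

Section UncertaintyAreas.
Variables (R : realType) (E : finType) (M : matroid E).
Variables (A : E -> seq (interval R)) (w : E -> R).

Lemma trivial_elt_value ws e : trivial_elt A w e -> weight_assignment A ws ->
  ws e = w e.
Proof. by move=> triv wa; apply/triv/wa. Qed.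

Lemma verifies_Up Q B f g : weight_assignment A w -> verifies M A w Q B ->
    f \notin Q -> f \in B -> g \notin B -> is_basis M (g |: (B :\ f)) ->
    w g <= w f ->
  Up A f = w f.
Proof.
move=> waw verQB fQ fB gB bX le_gf.
apply: sup_maximum => [|x Afx]; first exact: waw.
pose ws y := if y == f then x else w y.
have wa : weight_assignment A ws.
  by move=> y; rewrite /ws; case: eqP => [-> | _]; [exact: Afx | exact: waw].
have cs : consistent w Q ws.
  by move=> y yQ; rewrite /ws; case: eqP => // yf; move: fQ; rewrite -yf yQ.
have gf : g != f by apply: contraNneq gB => ->.
have gBf : g \notin B :\ f by apply: contra gB; exact: subsetP (subD1set B f) g.
have /is_basisP[iX _] := bX.
have := is_MWB_swap_le (verQB ws wa cs) fB gBf iX.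
by rewrite /ws eqxx (negbTE gf) => le_xg; exact: le_trans le_xg le_gf.
Qed.

End UncertaintyAreas.

Theorem lemma20 (R : realType) (E : finType) (M : matroid E)
    (A : E -> seq (interval R)) (w c : E -> R) (D K : {set E}) (e : E) :
  wum_wf A w c ->
  compatible_minor M A w c D K ->
  (* M' = M[D,K] has no non-trivial element f of type (a) or (b) *)
  (forall f, f \in mground D K -> ~ trivial_elt A w f ->
     ~ (w f = Lo A f /\
        exists C, [/\ mcircuit M D K C, f \in C & forall g, g \in C -> w g <= w f])
     /\
     ~ (w f = Up A f /\
        exists B', [/\ mbasis M D K B', f \in B',
                      f \in mground D K :\: mspan M D K (B' :\ f) &
                      forall g, g \in mground D K :\: mspan M D K (B' :\ f) ->
                        w f <= w g])) ->
  e \in mground D K ->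
  trivial_elt A w e ->
  (exists B, [/\ mbasis M D K B, e \in B &
     forall g, g \in mground D K :\: mspan M D K (B :\ e) -> w e <= w g]) ->
  compatible_minor M A w c D (e |: K).
Proof.
move=> wf [Q [B [verQB optQ sKB dDB]]] noab eG triv_e [B0 [bB0 eB0 minB0]].
have waw : weight_assignment A w by move=> x; case: (wf x).
have mwB : is_MWB M w B := verQB w waw (fun _ _ => erefl).
have [eB | eNB] := boolP (e \in B).
  by exists Q, B; split; rewrite // subUset sub1set eB.
have [f [fB fG' bX]] := mbasis_exchange mwB.1 sKB dDB bB0 eB0 eNB.
have le_ef := minB0 f fG'.
have fG : f \in mground D K by case/setDP: fG'.
have fK : f \notin K by move: fG; rewrite in_mground => /andP[].
have nontrivial_queried : ~ trivial_elt A w f -> f \in Q.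
  move=> ntriv; apply/negPn/negP => fQ; apply: (noab f fG ntriv).2; split.
    by rewrite (verifies_Up waw verQB fQ fB eNB bX le_ef).
  exists (B :\: K); apply: is_MWB_cocircuit_min mwB sKB dDB _.
  by rewrite in_setD fK.
have le_ef_ws ws : weight_assignment A ws -> consistent w Q ws -> ws e <= ws f.
  move=> wa cs; rewrite (trivial_elt_value triv_e wa).
  case fQ: (f \in Q); first by rewrite cs.
  have [-> // | neq] := eqVneq (ws f) (w f).
  suff /nontrivial_queried : ~ trivial_elt A w f by rewrite fQ.
  by move/trivial_elt_value/(_ wa) => eq; rewrite eq eqxx in neq.
have eBf : e \notin B :\ f by apply: contra eNB; exact: subsetP (subD1set B f) e.
exists Q, (e |: (B :\ f)); split=> //.
- move=> ws wa cs.
  exact: is_MWB_swap (verQB ws wa cs) fB eBf bX (le_ef_ws ws wa cs).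
- by rewrite setUS // subsetD1 sKB fK.
- apply/pred0P => x /=; apply/andP => -[xD /setU1P[xe | /setD1P[_ xB]]].
    by move: eG; rewrite in_mground -xe xD.
  by rewrite (disjointFr dDB xD) in xB.
Qed.
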